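(* Let $k\ge2$ and let $L_{01}\in\mathbb{R}^{k\times k}$ be the 0-1 loss, $L_{01}(i,j)=[i\ne j]$, with quadratic surrogate $\Phi_{quad}(f,y)=\frac1{2k}\|f+L_{01}(:,y)\|_2^2$. Then $$H_{\Phi_{quad},L_{01},\mathbb{R}^k}(\varepsilon)=\frac{\varepsilon^2}{4k},\qquad0\le\varepsilon\le1.$$
   Context: $[A]=1$ if $A$ is true and $0$ otherwise. $\mathrm{pred}(f)$ is the smallest index maximizing $f_c$. For $q\in\Delta_k$: $\ell(f,q)=\sum_cq_cL(\mathrm{pred}(f),c)$, $\phi(f,q)=\sum_cq_c\Phi(f,c)$, $\delta\ell(f,q)=\ell(f,q)-\inf_{\hat f\in\mathcal{F}}\ell(\hat f,q)$, $\delta\phi(f,q)=\phi(f,q)-\inf_{\hat f\in\mathcal{F}}\phi(\hat f,q)$; calibration function $H_{\Phi,L,\mathcal{F}}(\varepsilon)=\inf\{\delta\phi(f,q):f\in\mathcal{F},q\in\Delta_k,\delta\ell(f,q)\ge\varepsilon\}$ ($+\infty$ if empty); here $\mathcal{F}=\mathbb{R}^k$. *)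

From HB Require Import structures.
From mathcomp Require Import all_boot all_order all_algebra.
From mathcomp Require Import all_classical all_reals all_analysis.
Set Implicit Arguments. Unset Strict Implicit. Unset Printing Implicit Defensive.
Import Order.TTheory GRing.Theory Num.Theory.
Local Open Scope ring_scope.
Local Open Scope classical_set_scope.

Section Defs.
Variables (R : realType) (k : nat).

Definition L01 (i j : 'I_k) : R := if i == j then 0 else 1.

Definition is_argmax (f : 'I_k -> R) (i : 'I_k) : bool := [forall j, f j <= f i].

(* pred f = smallest index maximizing f (None only if k = 0) *)
Definition predf (f : 'I_k -> R) : option 'I_k :=
  [pick i | is_argmax f i && [forall j : 'I_k, (j < i)%N ==> ~~ is_argmax f j]].

Definition simplex : set ('I_k -> R) :=
  [set q | (forall c, 0 <= q c) /\ \sum_c q c = 1].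

Definition Phi_quad (f : 'I_k -> R) (y : 'I_k) : R :=
  (2 * k%:R)^-1 * \sum_c (f c + L01 c y) ^+ 2.

Definition ell (f : 'I_k -> R) (q : 'I_k -> R) : R :=
  match predf f with Some p => \sum_c q c * L01 p c | None => 0 end.

Definition phi (f : 'I_k -> R) (q : 'I_k -> R) : R := \sum_c q c * Phi_quad f c.

Definition dell (f q : 'I_k -> R) : \bar R :=
  ((ell f q)%:E - ereal_inf [set (ell g q)%:E | g in [set: 'I_k -> R]])%E.

Definition dphi (f q : 'I_k -> R) : \bar R :=
  ((phi f q)%:E - ereal_inf [set (phi g q)%:E | g in [set: 'I_k -> R]])%E.

(* calibration function H_{Phi_quad, L01, R^k}(eps); ereal_inf set0 = +oo *)
Definition calib (eps : R) : \bar R :=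
  ereal_inf [set dphi fq.1 fq.2 | fq in
     [set fq : ('I_k -> R) * ('I_k -> R) | simplex fq.2 /\ (eps%:E <= dell fq.1 fq.2)%E]].

End Defs.

(* For q in the simplex, the excess 0-1 risk of f is max q - q (pred f), while
   the excess quadratic risk is 1/(2k) ||f + 1 - q||^2, minimized at f = q - 1.
   With p = pred f and m an argmax of q, the coordinates a = f p + 1 - q p and
   b = f m + 1 - q m satisfy a - b >= q m - q p >= eps (as f p >= f m), so
   ||f + 1 - q||^2 >= a^2 + b^2 >= eps^2 / 2.  Equality is reached with
   q = ((1 - eps)/2, (1 + eps)/2, 0, ...) and f = (-1/2, -1/2, -1, ...): the tie
   is broken towards the first coordinate, where q is smaller. *)

From HB Require Import structures.
From mathcomp Require Import all_boot all_order all_algebra.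
From mathcomp Require Import all_classical all_reals all_analysis.
From mathcomp Require Import ring lra.
Set Implicit Arguments. Unset Strict Implicit. Unset Printing Implicit Defensive.
Import Order.TTheory GRing.Theory Num.Theory.
Local Open Scope ring_scope.

Section Calibration.
Variable R : realType.

Lemma ereal_inf_EFin_attained {T : Type} (h : T -> R) (t0 : T) :
  (forall t, h t0 <= h t) -> ereal_inf [set (h t)%:E | t in [set: T]] = (h t0)%:E.
Proof.
move=> h_min; apply/le_anti/andP; split.
  by apply: ereal_inf_lbound; exists t0.
by apply: le_ereal_inf_tmp => _ [t _ <-]; rewrite lee_fin.
Qed.

Lemma sum_pair (n : nat) (F : 'I_n -> R) (i j : 'I_n) : i != j ->
  (forall c, c != i -> c != j -> F c = 0) -> \sum_c F c = F i + F j.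
Proof.
move=> ij F0; rewrite (bigD1 i) //= (bigD1 j) 1?eq_sym //= big1 ?addr0 //.
by move=> c /andP[ci cj]; apply: F0.
Qed.

Lemma sqr_subr_le_sum_sqr (n : nat) (x : 'I_n -> R) (i j : 'I_n) :
  (x i - x j) ^+ 2 <= 2 * \sum_c x c ^+ 2.
Proof.
have sum_ge0 P : 0 <= \sum_(c | P c) x c ^+ 2 by apply: sumr_ge0 => c _; exact: sqr_ge0.
have [<-|ij] := eqVneq i j; first by rewrite subrr expr0n mulr_ge0 ?sum_ge0.
rewrite (bigD1 i) //= (bigD1 j) 1?eq_sym //=.
have := sum_ge0 (fun c => (c != i) && (c != j)).
have : 0 <= (x i + x j) ^+ 2 by exact: sqr_ge0.
nra.
Qed.

Lemma ell_predf (n : nat) (f q : 'I_n -> R) p :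
  \sum_c q c = 1 -> predf f = Some p -> ell f q = 1 - q p.
Proof.
move=> q1 fp; rewrite /ell fp -q1 (bigD1 p) //= [X in _ = X - _](bigD1 p) //=.
rewrite /L01 eqxx mulr0 add0r addrAC subrr add0r.
by apply: eq_bigr => c cp; rewrite eq_sym (negbTE cp) mulr1.
Qed.

Section PredictedClass.
Variable k : nat.
Implicit Types (f q : 'I_k.+1 -> R).

Lemma exists_argmax f : exists m, is_argmax f m.
Proof.
have [m _ m_max] := arg_maxP f (i0 := ord0) (P := xpredT) isT.
by exists m; apply/forallP => j; exact: m_max.
Qed.

Lemma predfP f :
  exists2 p, predf f = Some p & is_argmax f p /\ forall j, is_argmax f j -> (p <= j)%N.
Proof.
rewrite /predf; case: pickP => [p /andP[p_max /forallP p_first]|no_pred].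
  exists p => //; split=> // j j_max; rewrite leqNgt.
  by apply: contraL j_max => jp; have /implyP := p_first j; apply.
have [i i_argmax] := exists_argmax f.
have [m m_max m_first] := arg_minnP (fun j : 'I_k.+1 => nat_of_ord j) i_argmax.
have := no_pred m; rewrite /= m_max => /negbT/forallPn[j].
by rewrite negb_imply negbK => /andP[jm /m_first]; rewrite leqNgt jm.
Qed.

Lemma dell_predf f q m p : simplex q -> is_argmax q m -> predf f = Some p ->
  dell f q = (q m - q p)%:E.
Proof.
move=> [_ q1] /forallP m_max fp.
pose g c : R := if c == m then 1 else 0.
have [pg gp [/forallP pg_max _]] := predfP g.
have pgm : pg = m.
  by apply/eqP; have := pg_max m; rewrite /g eqxx; case: eqP; rewrite ?ler10.
rewrite /dell (ereal_inf_EFin_attained (t0 := g)) => [|h].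
  by rewrite (ell_predf q1 fp) (ell_predf q1 gp) pgm -EFinB; congr EFin; ring.
have [ph hp _] := predfP h.
by rewrite (ell_predf q1 hp) (ell_predf q1 gp) pgm lerB.
Qed.

End PredictedClass.

Section QuadraticRisk.
Variable k : nat.
Implicit Types (f q : 'I_k -> R).

Lemma phi_sqr_decomposition f q : simplex q ->
  phi f q = (2 * k%:R)^-1 * (\sum_c (f c + 1 - q c) ^+ 2 + \sum_c (q c - q c ^+ 2)).
Proof.
move=> [_ q1]; rewrite /phi /Phi_quad.
under eq_bigr => y _ do rewrite mulrCA mulr_sumr.
rewrite -mulr_sumr exchange_big /= -big_split /=; congr (_ * _).
apply: eq_bigr => c _; rewrite (bigD1 c) //= /L01 eqxx addr0.
have -> : \sum_(y | y != c) q y * (f c + (if c == y then 0 else 1)) ^+ 2 =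
          (\sum_(y | y != c) q y) * (f c + 1) ^+ 2.
  by rewrite mulr_suml; apply: eq_bigr => y yc; rewrite eq_sym (negbTE yc).
have -> : \sum_(y | y != c) q y = 1 - q c by move: q1; rewrite (bigD1 c) //=; lra.
ring.
Qed.

Lemma dphi_sqr f q : simplex q ->
  dphi f q = ((2 * k%:R)^-1 * \sum_c (f c + 1 - q c) ^+ 2)%:E.
Proof.
move=> q_simplex; have phiE := phi_sqr_decomposition _ q_simplex.
have opt0 : \sum_c ((q c - 1) + 1 - q c) ^+ 2 = 0.
  by rewrite big1 // => c _; rewrite addrNK subrr expr0n.
rewrite /dphi (ereal_inf_EFin_attained (t0 := fun c => q c - 1)) => [|g].
  by rewrite !phiE opt0 -EFinB; congr EFin; ring.
rewrite !phiE opt0 add0r ler_wpM2l ?invr_ge0 ?mulr_ge0 // lerDr.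
by apply: sumr_ge0 => c _; exact: sqr_ge0.
Qed.

End QuadraticRisk.

Lemma dphi_ge_of_dell (k : nat) (eps : R) (f q : 'I_k.+1 -> R) :
  0 <= eps -> simplex q -> (eps%:E <= dell f q)%E ->
  ((eps ^+ 2 / (4 * k.+1%:R))%:E <= dphi f q)%E.
Proof.
move=> eps_ge0 q_simplex.
have [p fp [/forallP p_max _]] := predfP f.
have [m m_argmax] := exists_argmax q.
rewrite (dell_predf q_simplex m_argmax fp) (dphi_sqr _ q_simplex) !lee_fin => eps_le.
pose x c := f c + 1 - q c.
have eps_sqr : eps ^+ 2 <= (x p - x m) ^+ 2.
  by rewrite ler_sqr ?nnegrE //; have := p_max m; rewrite /x; lra.
have S_ge := sqr_subr_le_sum_sqr x p m.
rewrite -!/(x _); set S := \sum_c _ in S_ge *.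
have k_gt0 : 0 < k.+1%:R :> R by rewrite ltr0n.
rewrite ler_pdivrMr ?mulr_gt0 //.
have -> : (2 * k.+1%:R)^-1 * S * (4 * k.+1%:R) = 2 * S by field; rewrite gt_eqF.
lra.
Qed.

Lemma calib_le (k : nat) (eps : R) : 0 <= eps <= 1 ->
  (calib k.+2 eps <= (eps ^+ 2 / (4 * k.+2%:R))%:E)%E.
Proof.
case/andP=> eps_ge0 eps_le1.
pose i0 : 'I_k.+2 := ord0; pose i1 : 'I_k.+2 := lift ord0 ord0.
have i10 : i1 != i0 by [].
pose q c : R := if c == i0 then (1 - eps) / 2 else if c == i1 then (1 + eps) / 2 else 0.
pose f c : R := if (c == i0) || (c == i1) then - 2^-1 else -1.
have q_simplex : simplex q.
  split=> [c|]; first by rewrite /q; case: ifP => _; [|case: ifP => _]; lra.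
  rewrite (sum_pair i10) => [|c ci1 ci0]; last by rewrite /q (negbTE ci0) (negbTE ci1).
  by rewrite /q !eqxx (negbTE i10); lra.
have q_argmax : is_argmax q i1.
  by apply/forallP => c; rewrite /q eqxx (negbTE i10); case: ifP => _; [|case: ifP => _]; lra.
have f_argmax : is_argmax f i0.
  by apply/forallP => c; rewrite /f eqxx /=; case: ifP => _; lra.
have fp : predf f = Some i0.
  have [p -> [_ p_first]] := predfP f.
  by congr Some; apply/val_inj/eqP; rewrite -leqn0 (p_first _ f_argmax).
apply: ereal_inf_lbound; exists (f, q) => /=.
  by split=> //; rewrite (dell_predf q_simplex q_argmax fp) lee_fin /q !eqxx (negbTE i10); lra.
rewrite (dphi_sqr _ q_simplex) (sum_pair i10) => [|c ci1 ci0]; last first.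
  by rewrite /f /q (negbTE ci0) (negbTE ci1) /=; ring.
rewrite /f /q !eqxx (negbTE i10) orbT /=; congr EFin; field.
by rewrite -natrD pnatr_eq0.
Qed.

End Calibration.

Theorem proposition12 (R : realType) (k : nat) (hk : (2 <= k)%N) (eps : R)
  (h0 : 0 <= eps) (h1 : eps <= 1) :
  calib k eps = (eps ^+ 2 / (4 * k%:R))%:E.
Proof.
case: k hk => [|[|k]] // _.
apply/le_anti; rewrite calib_le ?h0 ?h1 //=.
apply: le_ereal_inf_tmp => _ [[f q] /= [q_simplex eps_le] <-].
exact: dphi_ge_of_dell.
Qed.
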